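(* Let $N_T,N_R\ge 1$ be integers, let $\mathcal{R}>0$ and $\beta>0$, and let $\bar\gamma_k>0$. Define $\xi=[2\pi(2^{2\mathcal{R}}-1)]^{-1/2}$, $\tau=2^{\mathcal{R}}-1$, $\varphi_H=\tau+\frac{1}{2\xi\sqrt\beta}$, $\varphi_L=\tau-\frac{1}{2\xi\sqrt\beta}$, and $$F_{\mathrm{MRC}}(\gamma)=\Big\{1-\exp\!\Big(-\frac{\gamma}{\bar\gamma_k}\Big)\sum_{n=0}^{N_R-1}\frac{1}{n!}\Big(\frac{\gamma}{\bar\gamma_k}\Big)^n\Big\}^{N_T}.$$ Then the quantity $\bar\varepsilon_k^{\mathrm{TAS/MRC}}:=\xi\sqrt\beta\int_{\varphi_L}^{\varphi_H}F_{\mathrm{MRC}}(\gamma)\,d\gamma$ equals $$1+\xi\sqrt\beta\sum_{m=1}^{N_T}\binom{N_T}{m}(-1)^m\sum_{j_1=0}^{N_R-1}\cdots\sum_{j_m=0}^{N_R-1}\Big(\prod_{t=1}^m\frac{1}{j_t!}\Big)m^{-\mathcal{S}-1}\bar\gamma_k\Big\{\Upsilon\Big(\mathcal{S}+1,\frac{m\varphi_H}{\bar\gamma_k}\Big)-\Upsilon\Big(\mathcal{S}+1,\frac{m\varphi_L}{\bar\gamma_k}\Big)\Big\},$$ where $\mathcal{S}=\sum_{t=1}^m j_t$ and $\Upsilon(\alpha,z)=\int_0^z e^{-t}t^{\alpha-1}\,dt$ is the lower incomplete gamma function.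
   Context: $F_{\mathrm{MRC}}$ is the CDF of the per-hop SNR $\max_{1\le i\le N_T}\sum_{j=1}^{N_R}\gamma^{(i,j)}$ of transmit antenna selection with maximum ratio combining, where $\gamma^{(i,j)}$ are i.i.d. exponential with mean $\bar\gamma_k$ (Rayleigh fading). The quantity $\bar\varepsilon_k^{\mathrm{TAS/MRC}}$ is the paper's approximation of the average block error rate at hop $k$ in the finite-blocklength regime with coding rate $\mathcal{R}$ and blocklength $\beta$. *)

From Stdlib Require Import Reals.
From Coquelicot Require Import Coquelicot.
From mathcomp Require Import all_boot.

Open Scope R_scope.

Definition xi (Rc : R) : R := / sqrt (2 * PI * (Rpower 2 (2 * Rc) - 1)).
Definition tau (Rc : R) : R := Rpower 2 Rc - 1.
Definition phiH (Rc beta : R) : R := tau Rc + / (2 * xi Rc * sqrt beta).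
Definition phiL (Rc beta : R) : R := tau Rc - / (2 * xi Rc * sqrt beta).

(* CDF of the TAS/MRC per-hop SNR (Rayleigh fading), as in the paper. *)
Definition F_MRC (NT NR : nat) (gbar : R) (x : R) : R :=
  (1 - exp (- (x / gbar)) *
       \big[Rplus/0]_(n < NR) (/ INR (Factorial.fact n) * (x / gbar) ^ n)) ^ NT.

(* Lower incomplete gamma function Upsilon(a, z) = int_0^z e^{-t} t^(a-1) dt,
   for a positive integer argument a (only integer arguments S+1 occur);
   the power t^(a-1) is the natural-number power, so negative z is allowed. *)
Definition Upsilon (a : nat) (z : R) : R :=
  RInt (fun t => exp (- t) * t ^ (a - 1)) 0 z.

Definition eps_TAS_MRC (NT NR : nat) (Rc beta gbar : R) : R :=
  xi Rc * sqrt beta * RInt (F_MRC NT NR gbar) (phiL Rc beta) (phiH Rc beta).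

(* Expanding the N_T-th power by the binomial theorem, and each power of the
   truncated exponential series by the multinomial theorem, writes F_MRC as 1
   plus a finite combination of the functions exp(-x/g)^m (x/g)^S.  The
   substitution t = m x / g turns the integral of each of them over
   [phiL, phiH] into a difference of lower incomplete gamma values, while the
   constant 1 contributes xi sqrt(beta) (phiH - phiL) = 1. *)

From Stdlib Require Import Reals Lra.
From Coquelicot Require Import Coquelicot.
From mathcomp Require Import all_boot all_algebra.
From mathcomp Require Import Rstruct.
Import GRing.Theory.
Open Scope R_scope.

Section RingExpansions.
Local Open Scope ring_scope.

Lemma exprsum_ffun (R : comPzSemiRingType) n m (a : 'I_n -> R) :
  (\sum_(i < n) a i) ^+ m = \sum_(j : {ffun 'I_m -> 'I_n}) \prod_(t < m) a (j t).
Proof. by rewrite -[m in LHS]card_ord -prodr_const bigA_distr_bigA. Qed.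

Lemma expr1Bn (R : comPzRingType) (y : R) n :
  (1 - y) ^+ n = 1 + \sum_(1 <= m < n.+1) (-1) ^+ m * y ^+ m *+ 'C(n, m).
Proof.
rewrite exprBn big_ord_recl big_add1 big_mkord /=; congr (_ + _).
  by rewrite expr1n !expr0 !mulr1 bin0.
by apply: eq_bigr => i _; rewrite expr1n mulr1.
Qed.
End RingExpansions.

Lemma F_MRC_expand NT NR g x :
  F_MRC NT NR g x = 1 + \big[Rplus/0]_(1 <= m < NT.+1) (INR 'C(NT, m) * (-1) ^ m *
    \big[Rplus/0]_(j : {ffun 'I_m -> 'I_NR})
      ((\big[Rmult/1]_(t < m) / INR (Factorial.fact (j t))) *
       (exp (- (x / g)) ^ m * (x / g) ^ (\sum_(t < m) nat_of_ord (j t))%N))).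
Proof.
rewrite /F_MRC RpowE expr1Bn; congr (_ + _); apply: eq_bigr => m _.
rewrite exprMn exprsum_ffun RpowE INRE -mulr_natl mulrA mulr_sumr.
congr (_ * _); apply: eq_bigr => j _.
rewrite big_split /=.
under [(\prod_(t < m) pow _ _)%R]eq_bigr do rewrite RpowE.
by rewrite prodrXr !RpowE mulrCA.
Qed.

Lemma is_RInt_big_sum (I : eqType) (r : seq I) (P : pred I)
    (f : I -> R -> R) (v : I -> R) a b :
  (forall i, i \in r -> P i -> is_RInt (f i) a b (v i)) ->
  is_RInt (fun x => \big[Rplus/0]_(i <- r | P i) f i x) a b
    (\big[Rplus/0]_(i <- r | P i) v i).
Proof.
elim: r => [|i r IH] int_f.
  apply: (is_RInt_ext (fun=> 0)) => [x _|]; first by rewrite big_nil.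
  by rewrite big_nil; have := is_RInt_const a b 0; rewrite scal_zero_r.
have {}IH := IH (fun k kr => int_f k (@mem_behead _ (i :: r) k kr)).
rewrite big_cons; case: ifP => Pi.
- apply: (is_RInt_ext (fun x => plus (f i x) (\big[Rplus/0]_(k <- r | P k) f k x))).
    by move=> x _; rewrite big_cons Pi.
  by apply: is_RInt_plus => //; apply: int_f; rewrite ?mem_head.
- by apply: is_RInt_ext IH => x _; rewrite big_cons Pi.
Qed.

Lemma is_RInt_Upsilon S a b :
  is_RInt (fun t => exp (- t) * t ^ S) a b (Upsilon S.+1 b - Upsilon S.+1 a).
Proof.
have ex_RInt_integrand c d : ex_RInt (fun t => exp (- t) * t ^ S) c d.
  by apply: ex_RInt_continuous => t _; apply: ex_derive_continuous; auto_derive.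
rewrite /Upsilon subn1 /= -(RInt_Chasles _ 0 a b) //.
have -> : forall u v, plus u v - u = v by move=> u v; rewrite /plus /=; ring.
exact: RInt_correct.
Qed.

Lemma is_RInt_exp_pow_scaled (m S : nat) g a b : (0 < m)%N -> 0 < g ->
  is_RInt (fun x => exp (- (x / g)) ^ m * (x / g) ^ S) a b
    (/ INR m ^ (S + 1) * g *
     (Upsilon (S + 1) (INR m * b / g) - Upsilon (S + 1) (INR m * a / g))).
Proof.
move=> m_gt0 g_gt0.
have m_pos : 0 < INR m by apply/lt_0_INR/ltP.
have mS_neq0 : INR m ^ S <> 0 by apply: pow_nonzero; lra.
set k := INR m / g.
have k_pos : 0 < k by apply: Rdiv_lt_0_compat.
have kE z : k * z + 0 = INR m * z / g by rewrite /k; field; lra.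
(* With t = k x, exp (- (x / g)) ^ m * (x / g) ^ S = exp (- t) * t ^ S / INR m ^ S. *)
have := is_RInt_comp_lin _ k 0 a b _ (is_RInt_Upsilon S (k * a + 0) (k * b + 0)).
move/(is_RInt_scal _ _ _ (/ (k * INR m ^ S))).
rewrite addn1 !kE.
have -> : / INR m ^ S.+1 * g = / (k * INR m ^ S) by rewrite /k /=; field; lra.
apply: is_RInt_ext => x _.
rewrite /scal /= /mult /= kE -[exp _ ^ m]Rpower_pow; last exact: exp_pos.
rewrite /Rpower ln_exp.
have -> : INR m * x / g = INR m * (x / g) by field; lra.
rewrite Rpow_mult_distr Ropp_mult_distr_r /k; field; lra.
Qed.

Lemma is_RInt_F_MRC NT NR g a b : 0 < g ->
  is_RInt (F_MRC NT NR g) a b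
    ((b - a) + \big[Rplus/0]_(1 <= m < NT.+1)
      (INR 'C(NT, m) * (-1) ^ m *
       \big[Rplus/0]_(j : {ffun 'I_m -> 'I_NR})
         (let S := (\sum_(t < m) nat_of_ord (j t))%nat in
          (\big[Rmult/1]_(t < m) / INR (Factorial.fact (j t))) *
          / INR m ^ (S + 1) * g *
          (Upsilon (S + 1) (INR m * b / g) - Upsilon (S + 1) (INR m * a / g))))).
Proof.
move=> g_gt0.
apply: is_RInt_ext (fun x _ => esym (F_MRC_expand NT NR g x)) _.
apply: is_RInt_plus.
  by have := is_RInt_const a b 1; rewrite /scal /= /mult /= Rmult_1_r.
apply: is_RInt_big_sum => m; rewrite mem_index_iota => /andP [m_gt0 _] _.
apply: is_RInt_scal; apply: is_RInt_big_sum => j _ _.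
rewrite /= !Rmult_assoc; apply: is_RInt_scal; rewrite -Rmult_assoc.
exact: is_RInt_exp_pow_scaled.
Qed.

Lemma xi_gt0 Rc : 0 < Rc -> 0 < xi Rc.
Proof.
move=> Rc_gt0; apply/Rinv_0_lt_compat/sqrt_lt_R0/Rmult_lt_0_compat.
  by have := PI_RGT_0; lra.
by have := Rpower_lt 2 0 (2 * Rc); rewrite Rpower_O; lra.
Qed.

Lemma xi_sqrt_beta_phi_width Rc beta : 0 < Rc -> 0 < beta ->
  xi Rc * sqrt beta * (phiH Rc beta - phiL Rc beta) = 1.
Proof.
move=> /xi_gt0 xi_pos /sqrt_lt_R0 sqrt_beta_pos.
rewrite /phiH /phiL; field; lra.
Qed.

Theorem mainTheorem1 (NT NR : nat) (Rc beta gbar : R) :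
  (1 <= NT)%nat -> (1 <= NR)%nat -> 0 < Rc -> 0 < beta -> 0 < gbar ->
  eps_TAS_MRC NT NR Rc beta gbar =
  1 + xi Rc * sqrt beta *
    \big[Rplus/0]_(1 <= m < NT.+1)
      (INR 'C(NT, m) * (-1) ^ m *
       \big[Rplus/0]_(j : {ffun 'I_m -> 'I_NR})
         (let S := (\sum_(t < m) nat_of_ord (j t))%nat in
          (\big[Rmult/1]_(t < m) / INR (Factorial.fact (j t))) *
          / INR m ^ (S + 1) * gbar *
          (Upsilon (S + 1) (INR m * phiH Rc beta / gbar)
           - Upsilon (S + 1) (INR m * phiL Rc beta / gbar)))).
Proof.
move=> _ _ Rc_gt0 beta_gt0 gbar_gt0.
rewrite /eps_TAS_MRC (is_RInt_unique _ _ _ _ (is_RInt_F_MRC NT NR _ _ _ gbar_gt0)).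
by rewrite Rmult_plus_distr_l xi_sqrt_beta_phi_width.
Qed.
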